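(* Let $\bm{Z}=(Z_1,\ldots,Z_n)^T\in\{0,1\}^n$ with both treatment groups nonempty, and let $\bm{X}\in\mathbb{R}^{n\times p}$ be a covariate matrix whose first column is the all-ones vector, with rows $\bm{X}_1,\ldots,\bm{X}_n$. Let $\bm{\Sigma}$ be a symmetric positive definite $n\times n$ matrix with orthonormal eigenvectors $\bm{v}_1,\ldots,\bm{v}_n$ ($v_{ki}$ the $i$-th entry of $\bm{v}_k$) and eigenvalues $\lambda_1\ge\cdots\ge\lambda_n>0$. Assume $\bm{X}^T\bm{\Sigma}^{-1}\bm{X}$ is invertible and $\bm{Z}^T\bm{\Sigma}^{-1}(\bm{I}_n-\bm{X}(\bm{X}^T\bm{\Sigma}^{-1}\bm{X})^{-1}\bm{X}^T\bm{\Sigma}^{-1})\bm{Z}\neq0$. Then the solution of $$\min_{\bm{w}\in\mathbb{R}^n}\sum_{k=1}^n\lambda_k\Big(\sum_{i:Z_i=1}w_iv_{ki}-\sum_{i:Z_i=0}w_iv_{ki}\Big)^2$$ subject to $\sum_{i:Z_i=1}w_i=1$, $\sum_{i:Z_i=0}w_i=1$ and $\sum_{i:Z_i=1}w_i\bm{X}_i=\sum_{i:Z_i=0}w_i\bm{X}_i$ is $$\bm{w}=\bm{M}\,\frac{(\bm{I}_n-\bm{\Sigma}^{-1}\bm{X}(\bm{X}^T\bm{\Sigma}^{-1}\bm{X})^{-1}\bm{X}^T)\bm{\Sigma}^{-1}\bm{Z}}{\bm{Z}^T\bm{\Sigma}^{-1}(\bm{I}_n-\bm{X}(\bm{X}^T\bm{\Sigma}^{-1}\bm{X})^{-1}\bm{X}^T\bm{\Sigma}^{-1})\bm{Z}},$$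 with $\bm{M}$ diagonal, $M_{ii}=2Z_i-1$; i.e. the implied weights of the GLS estimator of the treatment coefficient.
   Context: The GLS estimator of $\tau$ in the model $\bm{Y}=\bm{X}\bm{\beta}+\tau\bm{Z}+\bm{\epsilon}$ with error covariance $\bm{\Sigma}$ is the last coordinate of $\big(\begin{pmatrix}\bm{X} & \bm{Z}\end{pmatrix}^T\bm{\Sigma}^{-1}\begin{pmatrix}\bm{X} & \bm{Z}\end{pmatrix}\big)^{-1}\begin{pmatrix}\bm{X} & \bm{Z}\end{pmatrix}^T\bm{\Sigma}^{-1}\bm{Y}$, and equals $\sum_{Z_i=1}w_iY_i-\sum_{Z_i=0}w_iY_i$ with $\bm{w}$ as displayed. *)

From HB Require Import structures.
From mathcomp Require Import all_boot all_order all_algebra.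
Set Implicit Arguments. Unset Strict Implicit. Unset Printing Implicit Defensive.
Import Order.TTheory GRing.Theory Num.Theory.
Local Open Scope ring_scope.

Section GLS.
Variables (R : realFieldType) (n p : nat).

Definition Zvec (Z : 'I_n -> bool) : 'cV[R]_n := \col_i (Z i)%:R.

Definition Mdiag (Z : 'I_n -> bool) : 'M[R]_n :=
  diag_mx (\row_i (2 * (Z i)%:R - 1)).

(* objective  sum_k lam_k (sum_{Z_i=1} w_i v_ki - sum_{Z_i=0} w_i v_ki)^2,
   where v_k is the k-th column of V, so v_ki = V i k *)
Definition objective (lam : 'I_n -> R) (V : 'M[R]_n) (Z : 'I_n -> bool)
    (w : 'cV[R]_n) : R :=
  \sum_k lam k * (\sum_(i | Z i) w i ord0 * V i k
                  - \sum_(i | ~~ Z i) w i ord0 * V i k) ^+ 2.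

Definition feasible (X : 'M[R]_(n, p)) (Z : 'I_n -> bool) (w : 'cV[R]_n) : Prop :=
  [/\ \sum_(i | Z i) w i ord0 = 1,
      \sum_(i | ~~ Z i) w i ord0 = 1 &
      forall j : 'I_p,
        \sum_(i | Z i) w i ord0 * X i j = \sum_(i | ~~ Z i) w i ord0 * X i j].

Definition gls_weights (X : 'M[R]_(n, p)) (Sigma : 'M[R]_n) (Z : 'I_n -> bool)
    : 'cV[R]_n :=
  let Si := invmx Sigma in
  let A := X^T *m Si *m X in
  let num := (1%:M - Si *m X *m invmx A *m X^T) *m Si *m Zvec Z in
  let den := (((Zvec Z)^T *m Si *m (1%:M - X *m invmx A *m X^T *m Si))
                *m Zvec Z) ord0 ord0 in
  den^-1 *: (Mdiag Z *m num).

End GLS.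

From HB Require Import structures.
From mathcomp Require Import all_boot all_order all_algebra.
From mathcomp Require Import ring.
Import Order.TTheory GRing.Theory Num.Theory.
Set Implicit Arguments. Unset Strict Implicit. Unset Printing Implicit Defensive.
Local Open Scope ring_scope.

(* With u = M w the objective becomes the quadratic form u^T Sigma u, because
   Sigma = V diag(lam) V^T, and, since X has an intercept column, the
   constraints become X^T u = 0 and Z^T u = 1.  The GLS weights give a feasible
   u0 with Sigma u0 in the column space of [X Z] (the Lagrange condition), so
   u0 is Sigma-orthogonal to every feasible direction and
   q(u) = q(u0) + q(u - u0) on the feasible set; positive definiteness of Sigma
   then gives minimality and uniqueness. *)

Definition qform (R : pzRingType) (n : nat) (S : 'M[R]_n) (x : 'cV[R]_n) : R :=
  (x^T *m S *m x) 0 0.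

Section ConstrainedQuadraticMinimization.
Variables (R : numDomainType) (n m : nat) (S : 'M[R]_n).
Hypotheses (S_sym : S^T = S) (S_posdef : forall x : 'cV[R]_n, x != 0 -> 0 < qform S x).

Lemma qform_ge0 (x : 'cV[R]_n) : 0 <= qform S x.
Proof.
have [->|x_neq0] := eqVneq x 0; last exact/ltW/S_posdef.
by rewrite /qform mulmx0 mxE.
Qed.

Lemma qform_eq0 (x : 'cV[R]_n) : qform S x = 0 -> x = 0.
Proof.
move=> qx0; have [//|x_neq0] := eqVneq x 0.
by have := S_posdef x_neq0; rewrite qx0 ltxx.
Qed.

Lemma qformD_orth (x y : 'cV[R]_n) :
  x^T *m S *m y = 0 -> qform S (x + y) = qform S x + qform S y.
Proof.
move=> xy0; have yx0 : y^T *m S *m x = 0.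
  by have := congr1 trmx xy0; rewrite !trmx_mul trmxK S_sym mulmxA trmx0.
by rewrite /qform [(x + y)^T]raddfD /= !(mulmxDl, mulmxDr) xy0 yx0 addr0 add0r mxE.
Qed.

Variables (B : 'M[R]_(n, m)) (b : 'cV[R]_m) (u0 : 'cV[R]_n) (c : 'cV[R]_m).
Hypotheses (u0_feasible : B^T *m u0 = b) (u0_stationary : S *m u0 = B *m c).

Lemma qform_constrainedE u :
  B^T *m u = b -> qform S u = qform S u0 + qform S (u - u0).
Proof.
move=> u_feasible; rewrite addrC -qformD_orth ?subrK //.
have Bd0 : B^T *m (u - u0) = 0 by rewrite mulmxBr u_feasible u0_feasible subrr.
by rewrite -mulmxA u0_stationary mulmxA -(trmxK B) -trmx_mul Bd0 trmx0 mul0mx.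
Qed.

Lemma qform_constrained_min u : B^T *m u = b -> qform S u0 <= qform S u.
Proof. by move=> /qform_constrainedE ->; rewrite lerDl qform_ge0. Qed.

Lemma qform_constrained_min_uniq u :
  B^T *m u = b -> qform S u = qform S u0 -> u = u0.
Proof.
move=> /qform_constrainedE -> /eqP; rewrite addrC -subr_eq0 addrK.
by move=> /eqP/qform_eq0/eqP; rewrite subr_eq0 => /eqP.
Qed.

End ConstrainedQuadraticMinimization.

Lemma posdef_unitmx (R : numFieldType) n (S : 'M[R]_n) :
  (forall x : 'cV[R]_n, x != 0 -> 0 < qform S x) -> S \in unitmx.
Proof.
move=> S_posdef; rewrite -row_free_unit -kermx_eq0; apply/eqP/row_matrixP => i.
rewrite row0; set r := row i (kermx S).
have rS0 : r *m S = 0 by rewrite -row_mul mulmx_ker row0.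
apply: trmx_inj; rewrite trmx0; apply: (qform_eq0 S_posdef).
by rewrite /qform trmxK rS0 mul0mx mxE.
Qed.

Lemma spectral_decomposition (R : comPzRingType) n (S V : 'M[R]_n) (lam : 'I_n -> R) :
  V^T *m V = 1%:M -> (forall k, S *m col k V = lam k *: col k V) ->
  S = V *m diag_mx (\row_k lam k) *m V^T.
Proof.
move=> V_orth V_eigen; have SV : S *m V = V *m diag_mx (\row_k lam k).
  apply/matrixP => i k; have /matrixP/(_ i 0) := V_eigen k.
  rewrite mul_mx_diag !mxE => eigen_ik; rewrite mulrC -eigen_ik.
  by apply: eq_bigr => j _; rewrite !mxE.
by rewrite -SV -mulmxA (mulmx1C V_orth) mulmx1.
Qed.

Section SignedWeights.
Variables (R : realFieldType) (n : nat) (Z : 'I_n -> bool).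
Local Notation M := (Mdiag R Z).
Local Notation Zv := (Zvec R Z).

Lemma Mdiag_mulmxK (w : 'cV[R]_n) : M *m (M *m w) = w.
Proof.
rewrite mulmxA /Mdiag mulmx_diag -[RHS]mul1mx; congr (_ *m _).
apply/matrixP => i j; rewrite !mxE; case: eqP => [->|_]; last by rewrite mulr0n.
by case: (Z j) => /=; ring.
Qed.

Lemma sum_mul_Mdiag (f : 'I_n -> R) (w : 'cV[R]_n) :
  \sum_i f i * (M *m w) i 0 =
  \sum_(i | Z i) w i 0 * f i - \sum_(i | ~~ Z i) w i 0 * f i.
Proof.
have Mw i : (M *m w) i 0 = (2 * (Z i)%:R - 1) * w i 0.
  by rewrite /Mdiag mul_diag_mx !mxE.
rewrite (bigID Z) /= -sumrN; congr (_ + _); apply: eq_bigr => i.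
  by move=> Zi; rewrite Mw Zi /=; ring.
by move=> /negbTE nZi; rewrite Mw nZi /=; ring.
Qed.

Lemma imbalance_Mdiag p (X : 'M[R]_(n, p)) (w : 'cV[R]_n) j :
  (X^T *m (M *m w)) j 0 =
  \sum_(i | Z i) w i 0 * X i j - \sum_(i | ~~ Z i) w i 0 * X i j.
Proof. by rewrite mxE -sum_mul_Mdiag; apply: eq_bigr => i _; rewrite mxE. Qed.

Lemma Zvec_mul_Mdiag (w : 'cV[R]_n) : (Zv^T *m (M *m w)) 0 0 = \sum_(i | Z i) w i 0.
Proof.
rewrite mxE (eq_bigr (fun i => (Z i)%:R * (M *m w) i 0)) => [|i _]; last by rewrite !mxE.
rewrite sum_mul_Mdiag [X in _ - X]big1 => [|i /negbTE ->]; last by rewrite mulr0.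
by rewrite subr0; apply: eq_bigr => i ->; rewrite mulr1.
Qed.

Definition balance_mx p (X : 'M[R]_(n, p)) : 'M[R]_(n, p + 1) := row_mx X Zv.

Lemma feasibleE p (X : 'M[R]_(n, p.+1)) (w : 'cV[R]_n) :
  (forall i, X i 0 = 1) ->
  feasible X Z w <-> (balance_mx X)^T *m (M *m w) = col_mx 0 1.
Proof.
move=> X_ones; rewrite tr_row_mx mul_col_mx; split.
  case=> treated_sum _ balanced; congr col_mx.
    by apply/matrixP => j k; rewrite (ord1 k) imbalance_Mdiag balanced subrr mxE.
  by rewrite [LHS]mx11_scalar Zvec_mul_Mdiag treated_sum.
move=> /eq_col_mx [balanced treated].
have treated_sum : \sum_(i | Z i) w i 0 = 1.
  by rewrite -Zvec_mul_Mdiag treated mxE.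
have balanced_j j : \sum_(i | Z i) w i 0 * X i j = \sum_(i | ~~ Z i) w i 0 * X i j.
  by apply/eqP; rewrite -subr_eq0 -imbalance_Mdiag balanced mxE.
split=> //; have := balanced_j 0.
have sum_ones (P : pred 'I_n) : \sum_(i | P i) w i 0 * X i 0 = \sum_(i | P i) w i 0.
  by apply: eq_bigr => i _; rewrite X_ones mulr1.
by rewrite !sum_ones treated_sum.
Qed.

Lemma objectiveE (V : 'M[R]_n) (lam : 'I_n -> R) (w : 'cV[R]_n) :
  objective lam V Z w = qform (V *m diag_mx (\row_k lam k) *m V^T) (M *m w).
Proof.
rewrite /qform; set D := diag_mx _; set y := V^T *m (M *m w).
have -> : (M *m w)^T *m (V *m D *m V^T) *m (M *m w) = y^T *m D *m y.
  by rewrite /y [(V^T *m _)^T]trmx_mul trmxK !mulmxA.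
rewrite mxE; apply: eq_bigr => k _.
rewrite /D mul_mx_diag mxE [y^T 0 k]mxE [(\row_k lam k) 0 k]mxE -imbalance_Mdiag -/y.
by rewrite expr2 mulrCA mulrA.
Qed.

End SignedWeights.

Section GLSSolution.
Variables (R : realFieldType) (n p : nat).
Variables (X : 'M[R]_(n, p)) (Sigma : 'M[R]_n) (Z : 'I_n -> bool).
Local Notation M := (Mdiag R Z).
Local Notation Zv := (Zvec R Z).
Local Notation Si := (invmx Sigma).
Local Notation A := (X^T *m invmx Sigma *m X).

Definition gls_num : 'cV[R]_n := (1%:M - Si *m X *m invmx A *m X^T) *m Si *m Zv.

Definition gls_den : R :=
  ((Zv^T *m Si *m (1%:M - X *m invmx A *m X^T *m Si)) *m Zv) 0 0.

Hypotheses (Sigma_unit : Sigma \in unitmx) (A_unit : A \in unitmx).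
Hypothesis (den_neq0 : gls_den != 0).

Lemma Mdiag_gls_weights : M *m gls_weights X Sigma Z = gls_den^-1 *: gls_num.
Proof. by rewrite -scalemxAr Mdiag_mulmxK. Qed.

Lemma gls_num_balanced : X^T *m gls_num = 0.
Proof.
by rewrite /gls_num !mulmxA mulmxBr mulmx1 !mulmxA mulmxV // mul1mx subrr !mul0mx.
Qed.

Lemma gls_num_treated : Zv^T *m gls_num = gls_den%:M.
Proof.
rewrite [LHS]mx11_scalar /gls_num /gls_den; congr (_ 0 0)%:M.
by rewrite !(mulmxBr, mulmxBl, mulmx1, mul1mx, mulmxA).
Qed.

Lemma gls_weights_feasible :
  (balance_mx Z X)^T *m (M *m gls_weights X Sigma Z) = col_mx 0 1.
Proof.
rewrite Mdiag_gls_weights tr_row_mx mul_col_mx -!scalemxAr.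
by rewrite gls_num_balanced gls_num_treated scaler0 scale_scalar_mx mulVf.
Qed.

Lemma gls_weights_stationary :
  Sigma *m (M *m gls_weights X Sigma Z) =
  balance_mx Z X *m (gls_den^-1 *: col_mx (- (invmx A *m X^T *m Si *m Zv)) 1).
Proof.
rewrite Mdiag_gls_weights -!scalemxAr; congr (_ *: _).
rewrite mul_row_col mulmxN mulmx1 addrC /gls_num.
by rewrite !(mulmxBr, mulmxBl, mulmx1, mul1mx, mulmxA) mulmxV // !mul1mx.
Qed.

End GLSSolution.

Theorem mainTheorem3 (R : realFieldType) (n p : nat)
  (Z : 'I_n -> bool) (X : 'M[R]_(n, p.+1)) (Sigma V : 'M[R]_n) (lam : 'I_n -> R) :
  (exists i, Z i) -> (exists i, ~~ Z i) ->
  (forall i, X i ord0 = 1) ->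
  Sigma^T = Sigma ->
  (forall x : 'cV[R]_n, x != 0 -> 0 < (x^T *m Sigma *m x) ord0 ord0) ->
  V^T *m V = 1%:M ->
  (forall k, Sigma *m col k V = lam k *: col k V) ->
  (forall k l : 'I_n, (k <= l)%N -> lam l <= lam k) ->
  (forall k, 0 < lam k) ->
  X^T *m invmx Sigma *m X \in unitmx ->
  (((Zvec R Z)^T *m invmx Sigma
     *m (1%:M - X *m invmx (X^T *m invmx Sigma *m X) *m X^T *m invmx Sigma))
     *m Zvec R Z) ord0 ord0 != 0 ->
  let w := gls_weights X Sigma Z in
  [/\ feasible X Z w,
      (forall w' : 'cV[R]_n, feasible X Z w' -> objective lam V Z w <= objective lam V Z w') &
      (forall w' : 'cV[R]_n, feasible X Z w' ->
         objective lam V Z w' = objective lam V Z w -> w' = w)].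
Proof.
move=> _ _ X_ones Sigma_sym Sigma_posdef V_orth V_eigen _ _ A_unit den_neq0 w.
have Sigma_unit := posdef_unitmx Sigma_posdef.
have objE w' : objective lam V Z w' = qform Sigma (Mdiag R Z *m w').
  by rewrite objectiveE -(spectral_decomposition V_orth V_eigen).
have w_feasible := gls_weights_feasible A_unit den_neq0.
have w_stationary := gls_weights_stationary X Z Sigma_unit.
have feasibleP w' := feasibleE Z w' X_ones.
split=> [|w' /feasibleP w'_feasible|w' /feasibleP w'_feasible].
- exact/feasibleP.
- by rewrite !objE (qform_constrained_min Sigma_sym Sigma_posdef w_feasible w_stationary).
- rewrite !objE => /(qform_constrained_min_uniq Sigma_sym Sigma_posdef
                        w_feasible w_stationary w'_feasible).
  by move=> /(congr1 (mulmx (Mdiag R Z))); rewrite !Mdiag_mulmxK.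
Qed.
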